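(* For all integers $n > 2$, $\det'(K_n) = \left\lfloor \frac{2n}{3} \right\rfloor$.
   Context: $K_n$ is the complete graph on $n$ vertices. For a graph $G$ with at most one isolated vertex and no component isomorphic to $K_2$, an edge subset $T$ is an edge determining set if the only automorphism $\phi$ of $G$ satisfying $\{\phi(u),\phi(v)\}=\{u,v\}$ for all $\{u,v\}\in T$ is the identity; the determining index $\det'(G)$ is the minimum size of an edge determining set. *)

From mathcomp Require Import all_boot all_fingroup.
Set Implicit Arguments. Unset Strict Implicit. Unset Printing Implicit Defensive.

(* A simple graph on a finite vertex type V is given by an adjacency relation
   e : rel V (assumed symmetric and irreflexive where relevant). *)

Definition edges (V : finType) (e : rel V) : {set {set V}} :=
  [set E : {set V} | [exists u, exists v, (u != v) && e u v && (E == [set u; v])]].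



Definition edge_determiningb (V : finType) (e : rel V) (T : {set {set V}}) : bool :=
  (T \subset edges e) &&
  [forall phi : {perm V},
     ([forall u, forall v, e (phi u) (phi v) == e u v] &&
      [forall u, forall v, ([set u; v] \in T) ==> ([set phi u; phi v] == [set u; v])])
     ==> (phi == 1%g)].

(* Determining index det'(G): minimum size of an edge determining set.
   (The default value #|edges e| is only reached if no edge determining set
   exists, which does not happen for the graphs considered by the paper.) *)
Definition det_index (V : finType) (e : rel V) : nat :=
  \big[minn/#|edges e|]_(T : {set {set V}} | edge_determiningb e T) #|T|.

Definition complete_rel (n : nat) : rel 'I_n := fun i j => i != j.

(* An automorphism of K_n is an arbitrary permutation, and a permutation
   fixing every edge of T setwise sends each vertex to one lying in exactly the
   same edges of T.  Hence T is edge determining iff it separates the vertices,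
   which for a family of 2-sets means: at most one vertex is uncovered and no
   edge of T is a K_2 component.  In such a T every edge contains at most one
   vertex of degree 1, so with c covered vertices and l of degree 1 we get
   2|T| >= 2c - l >= 2c - |T|, whence 3|T| >= 2(n - 1).  Disjoint paths on three
   vertices, plus one pendant edge when n = 2 (mod 3), reach floor(2n/3). *)

From mathcomp Require Import all_boot all_order all_fingroup.
From mathcomp Require Import zify.
Set Implicit Arguments. Unset Strict Implicit. Unset Printing Implicit Defensive.
Import Order.TTheory.

Section Separation.
Variable V : finType.
Implicit Types (T : {set {set V}}) (E : {set V}) (phi : {perm V}).

Definition separates T :=
  forall u v : V, u != v -> exists2 E, E \in T & (u \in E) != (v \in E).

Lemma separatesS T1 T2 : T1 \subset T2 -> separates T1 -> separates T2.
Proof.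
by move=> /subsetP sT12 sepT1 u v /sepT1[E /sT12 E_T2 uvE]; exists E.
Qed.

Lemma imset_tperm_id (u v : V) E : (u \in E) = (v \in E) -> tperm u v @: E = E.
Proof.
move=> uvE; apply/setP => x; rewrite -{1}(tpermK u v x) mem_imset; last exact: perm_inj.
by case: tpermP => [->|->|]; rewrite ?uvE.
Qed.

Lemma setwise_stabilizer_trivialP T :
  (forall phi, {in T, forall E, phi @: E = E} -> phi = 1%g) <-> separates T.
Proof.
split=> [trivT u v neq_uv | sepT phi stab_phi].
  apply/exists_inP; apply: contraNT neq_uv => /exists_inPn noE; apply/eqP.
  suff /permP/(_ u) : tperm u v = 1%g by rewrite tpermL perm1.
  apply: trivT => E E_T; apply: imset_tperm_id.
  by move: (noE E E_T); rewrite negbK => /eqP.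
apply/permP => v; rewrite perm1; apply/eqP/negPn/negP => /sepT[E E_T].
by rewrite -{1}(stab_phi E E_T) mem_imset ?eqxx //; exact: perm_inj.
Qed.
End Separation.

Section Pairs.
Variable V : finType.
Implicit Types (E F : {set V}).

Lemma card2_set2 E (u v : V) :
  #|E| = 2 -> u != v -> u \in E -> v \in E -> E = [set u; v].
Proof.
move=> cardE neq_uv uE vE; apply/esym/eqP.
rewrite eqEcard cardE cards2 neq_uv leqnn andbT.
by apply/subsetP => x; rewrite !inE => /orP[]/eqP->.
Qed.

Variable T : {set {set V}}.
Hypothesis T_pairs : {in T, forall E, #|E| = 2}.

Definition isolated E := [forall F in T, (F != E) ==> [disjoint F & E]].

Lemma not_isolatedP E :
  reflect (exists2 F, F \in T & (F != E) /\ exists2 x, x \in F & x \in E) (~~ isolated E).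
Proof.
apply: (iffP forall_inPn) => [[F F_T] | [F F_T [neq_FE [x xF xE]]]].
  rewrite negb_imply => /andP[neq_FE /pred0Pn[x /andP[xF xE]]].
  by exists F => //; split; last exists x.
exists F => //; rewrite negb_imply neq_FE; apply/negP => /disjointFr/(_ xF).
by rewrite xE.
Qed.

Lemma separates_pairsP :
  separates T <-> #|~: cover T| <= 1 /\ {in T, forall E, ~~ isolated E}.
Proof.
split=> [sepT | [uncov1 nonisoT] u v neq_uv].
  split=> [|E E_T].
    apply/card_le1_eqP => u v; rewrite !inE => u_unc v_unc; apply/eqP.
    have outE x E : x \notin cover T -> E \in T -> x \notin E.
      by move=> x_unc E_T; apply: contraNN x_unc => xE; apply/bigcupP; exists E.
    case: eqVneq => // /sepT[E E_T].
    by rewrite (negbTE (outE u E u_unc E_T)) (negbTE (outE v E v_unc E_T)).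
  have /eqP/cards2P[a [b [neq_ab defE]]] := T_pairs E_T.
  have [F F_T abF] := sepT a b neq_ab.
  apply/not_isolatedP; exists F => //; split.
    by apply: contraNneq abF => ->; rewrite defE !inE !eqxx orbT.
  have [aF | aF] := boolP (a \in F); first by exists a; rewrite // defE !inE eqxx.
  exists b; last by rewrite defE !inE eqxx orbT.
  by move: abF; rewrite (negbTE aF); case: (b \in F).
apply/exists_inP; apply: contraNT (neq_uv) => /exists_inPn noE.
have uvE E : E \in T -> (u \in E) = (v \in E) by move=> /noE; rewrite negbK => /eqP.
case: (boolP (u \in cover T)) => [/bigcupP[E E_T uE] | u_unc].
  have defE := card2_set2 (T_pairs E_T) neq_uv uE (etrans (esym (uvE E E_T)) uE).
  have /not_isolatedP[F F_T [neq_FE [x xF xE]]] := nonisoT E E_T.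
  have uF : u \in F.
    by move: xE xF; rewrite defE !inE => /orP[]/eqP-> //; rewrite (uvE F F_T).
  have vF : v \in F by rewrite -(uvE F).
  by rewrite (card2_set2 (T_pairs F_T) neq_uv uF vF) -defE eqxx in neq_FE.
have v_unc : v \notin cover T.
  apply: contraNN u_unc => /bigcupP[E E_T vE].
  by apply/bigcupP; exists E; rewrite ?uvE.
by apply/eqP; apply: (card_le1_eqP uncov1); rewrite inE.
Qed.

Definition deg v := #|[set E in T | v \in E]|.

Definition leaves := [set v | deg v == 1].

Lemma sum_deg (A : {set V}) : \sum_(v in A) deg v = \sum_(E in T) #|E :&: A|.
Proof.
under eq_bigr do rewrite /deg -sum1dep_card big_mkcondr /=.
rewrite exchange_big /=; apply: eq_bigr => E _.
rewrite -big_mkcondr sum1dep_card; apply: eq_card => v.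
by rewrite !inE andbC.
Qed.

Lemma deg_gt0 v : (0 < deg v) = (v \in cover T).
Proof.
rewrite card_gt0; apply/set0Pn/bigcupP => [[E] | [E E_T vE]].
  by rewrite inE => /andP[E_T vE]; exists E.
by exists E; rewrite inE E_T.
Qed.

Lemma leaves_edge_isolated E : E \in T -> E \subset leaves -> isolated E.
Proof.
move=> E_T /subsetP E_leaves; apply/negPn/not_isolatedP => [[F F_T [neq_FE [x xF xE]]]].
have /card_le1_eqP edges_x : deg x <= 1 by move: (E_leaves x xE); rewrite inE => /eqP->.
by rewrite (edges_x F E) ?eqxx ?inE ?F_T ?E_T in neq_FE.
Qed.

Lemma leq_card_leaves : {in T, forall E, ~~ isolated E} -> #|leaves| <= #|T|.
Proof.
move=> nonisoT.
have <- : \sum_(v in leaves) deg v = #|leaves|.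
  by rewrite -sum1_card; apply: eq_bigr => v; rewrite inE => /eqP.
rewrite sum_deg -sum1_card; apply: leq_sum => E E_T.
rewrite leqNgt; apply: contra (nonisoT E E_T) => two_leaves.
apply: (leaves_edge_isolated E_T); apply/setIidPl/eqP.
by rewrite eqEcard subsetIl T_pairs.
Qed.

Lemma leq_card_cover_pairs : {in T, forall E, ~~ isolated E} -> 2 * #|cover T| <= 3 * #|T|.
Proof.
move=> nonisoT.
have sum_mem (A : {set V}) : \sum_v (v \in A) = #|A|.
  by rewrite -sum1_card [RHS]big_mkcond; apply: eq_bigr => v _; case: (v \in A).
have handshake : \sum_v deg v = 2 * #|T|.
  rewrite (eq_bigl (fun v => v \in [set: V])) => [|v]; last by rewrite inE.
  rewrite sum_deg (eq_bigr (fun _ => 2)) => [|E E_T]; last by rewrite setIT T_pairs.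
  by rewrite sum_nat_const mulnC.
have : \sum_v 2 * (v \in cover T) <= \sum_v (deg v + (v \in leaves)).
  by apply: leq_sum => v _; rewrite -deg_gt0 inE; case: (deg v) => [|[|]].
rewrite -big_distrr big_split /= handshake !sum_mem.
by move=> /leq_trans; apply; rewrite mulSn addnC leq_add2r; exact: leq_card_leaves.
Qed.
End Pairs.

Lemma imset_set2 (aT rT : finType) (f : aT -> rT) (u v : aT) :
  f @: [set u; v] = [set f u; f v].
Proof. by rewrite imsetU1 imset_set1. Qed.

Section CompleteGraph.
Variable n : nat.
Local Notation Kn := (@complete_rel n).

Lemma edges_complete_pairs : {in edges Kn, forall E : {set 'I_n}, #|E| = 2}.
Proof.
move=> E; rewrite inE => /existsP[u /existsP[v /andP[/andP[neq_uv _] /eqP->]]].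
by rewrite cards2 neq_uv.
Qed.

Lemma edge_determining_completeP (T : {set {set 'I_n}}) :
  edge_determiningb Kn T <-> T \subset edges Kn /\ separates T.
Proof.
rewrite -setwise_stabilizer_trivialP.
split=> [/andP[T_edges /forallP det_T] | [T_edges triv_T]].
  split=> // phi stab_phi; apply/eqP/(implyP (det_T phi)).
  apply/andP; split; apply/forallP => u; apply/forallP => v.
    by rewrite /complete_rel (inj_eq perm_inj).
  by apply/implyP => uv_T; rewrite -imset_set2 stab_phi.
apply/andP; split=> //; apply/forallP => phi; apply/implyP => /andP[_ /forallP fix_pairs].
apply/eqP/triv_T => E E_T.
have := subsetP T_edges E E_T; rewrite inE => /existsP[u /existsP[v /andP[_ /eqP defE]]].
rewrite defE imset_set2; apply/eqP.
by move/forallP: (fix_pairs u) => /(_ v) /implyP; apply; rewrite -defE.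
Qed.

Lemma leq_edge_determining_complete_card T :
  edge_determiningb Kn T -> 2 * n <= 3 * #|T| + 2.
Proof.
move=> /edge_determining_completeP[T_edges].
have T_pairs := sub_in1 (subsetP T_edges) (@edges_complete_pairs).
move=> /(separates_pairsP T_pairs)[uncov1 nonisoT].
have card_n : #|cover T| + #|~: cover T| = n by rewrite cardsC card_ord.
apply: (@leq_trans (2 * (#|cover T| + #|~: cover T|))); first by rewrite card_n.
rewrite mulnDr leq_add ?(leq_card_cover_pairs T_pairs) //.
exact: leq_mul (leqnn 2) uncov1.
Qed.
End CompleteGraph.

Section PathConstruction.
Variable n : nat.
Hypothesis n_gt1 : 1 < n.
Local Notation m := ((2 * n.+1) %/ 3).

(* Edges 2q and 2q+1 start at 3q and 3q+1 and form the path 3q - 3q+1 - 3q+2.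
   The cap only affects the last edge when n.+1 = 2 %[mod 3]: it is moved to
   start at 3k-1 (k = n.+1 %/ 3), so that it hangs off the last path instead of
   being an isolated edge. *)
Definition path_start j := minn ((3 * j) %/ 2) (3 * (n.+1 %/ 3)).-1.

Lemma path_start_lt j : j < m -> (path_start j).+1 < n.+1.
Proof. rewrite /path_start; lia. Qed.

Lemma path_start_cover v : v < n ->
  (2 * v) %/ 3 < m /\ path_start ((2 * v) %/ 3) <= v <= (path_start ((2 * v) %/ 3)).+1.
Proof. rewrite /path_start; lia. Qed.

Lemma path_start_adjacent j : j < m -> exists2 i, i < m &
  path_start i = (path_start j).+1 \/ (path_start i).+1 = path_start j.
Proof.
move=> lt_jm; have [next | prev] := boolP ((j.+1 < m) && (j %% 2 == 0)).
  by exists j.+1; [lia | left; move: next; rewrite /path_start; lia].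
by exists j.-1; [lia | right; move: prev; rewrite /path_start; lia].
Qed.

Definition vertex_pair x : {set 'I_n.+1} := [set inord x; inord x.+1].

Definition path_edges := [set vertex_pair (path_start j) | j : 'I_m].

Lemma mem_vertex_pair x (v : 'I_n.+1) : x < n -> (v \in vertex_pair x) = (x <= v <= x.+1).
Proof. by move=> lt_xn; rewrite !inE -!(inj_eq val_inj) /= !inordK //; lia. Qed.

Lemma vertex_pair_neighbours x : x.+1 < n ->
  vertex_pair x != vertex_pair x.+1 /\ exists2 v, v \in vertex_pair x & v \in vertex_pair x.+1.
Proof.
move=> lt_x1n; split; last by exists (inord x.+1); rewrite !mem_vertex_pair ?inordK //; lia.
apply/negP => /eqP/setP/(_ (inord x)); rewrite !mem_vertex_pair ?inordK //; lia.
Qed.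

Lemma path_edges_sub : path_edges \subset edges (@complete_rel n.+1).
Proof.
apply/subsetP => E /imsetP[j _ ->]; have lt_start := path_start_lt (ltn_ord j).
rewrite inE; apply/existsP; exists (inord (path_start j)).
apply/existsP; exists (inord (path_start j).+1).
have neq : inord (path_start j) != inord (path_start j).+1 :> 'I_n.+1.
  by rewrite -(inj_eq val_inj) /= !inordK //; lia.
by rewrite /complete_rel neq eqxx.
Qed.

Lemma card_path_edges : #|path_edges| <= m.
Proof. by apply: leq_trans (leq_imset_card _ _) _; rewrite card_ord. Qed.

Lemma card_uncovered_path_edges : #|~: cover path_edges| <= 1.
Proof.
rewrite -(cards1 (@ord_max n)); apply/subset_leq_card/subsetP => v.
rewrite !inE; apply: contraR => neq_v_max.
have lt_vn : v < n by move: neq_v_max (ltn_ord v); rewrite -(inj_eq val_inj) /=; lia.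
have [lt_jm cover_v] := path_start_cover lt_vn.
apply/bigcupP; exists (vertex_pair (path_start ((2 * v) %/ 3))).
  by apply/imsetP; exists (Ordinal lt_jm).
by rewrite mem_vertex_pair //; have := path_start_lt lt_jm.
Qed.

Lemma path_edges_not_isolated : {in path_edges, forall E, ~~ isolated path_edges E}.
Proof.
move=> _ /imsetP[j _ ->]; have [i lt_im adj] := path_start_adjacent (ltn_ord j).
have F_T : vertex_pair (path_start i) \in path_edges by apply/imsetP; exists (Ordinal lt_im).
apply/not_isolatedP; exists (vertex_pair (path_start i)) => //.
have lt_i := path_start_lt lt_im; have lt_j := path_start_lt (ltn_ord j).
case: adj => adj.
  have [neq [v vj vi]] := @vertex_pair_neighbours (path_start j) ltac:(lia).
  by rewrite adj eq_sym; split=> //; exists v.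
have [neq [v vi vj]] := @vertex_pair_neighbours (path_start i) ltac:(lia).
by rewrite -adj; split=> //; exists v.
Qed.

Lemma path_edges_determining : edge_determiningb (@complete_rel n.+1) path_edges.
Proof.
have T_pairs := sub_in1 (subsetP path_edges_sub) (@edges_complete_pairs _).
apply/edge_determining_completeP; split; first exact: path_edges_sub.
apply/(separates_pairsP T_pairs); split.
  exact: card_uncovered_path_edges.
exact: path_edges_not_isolated.
Qed.
End PathConstruction.

Theorem theorem8 (n : nat) : 2 < n -> det_index (@complete_rel n) = (2 * n) %/ 3.
Proof.
case: n => [//|n] n_gt2.
have lower T : edge_determiningb (@complete_rel n.+1) T -> (2 * n.+1) %/ 3 <= #|T|.
  by move=> /leq_edge_determining_complete_card; lia.
have edges_determining :
    edge_determiningb (@complete_rel n.+1) (edges (@complete_rel n.+1)).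
  have /edge_determining_completeP[_ sep] := path_edges_determining n_gt2.
  apply/edge_determining_completeP; split; first exact: subxx.
  exact: separatesS (path_edges_sub n_gt2) sep.
rewrite /det_index -minEnat; apply/eqP; rewrite eqn_leq; apply/andP; split.
  apply: leq_trans (card_path_edges n); rewrite -leEnat.
  exact: (bigmin_le_cond _ _ (path_edges_determining n_gt2)).
by rewrite -leEnat; apply: le_bigmin => [|T /lower]; rewrite leEnat //; exact: lower.
Qed.
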